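(* Let $\mathcal V$ be a descent category, $T$ a finite simplicial set, $S\subset T$ a simplicial subset, and $f:X\to Y$ a hypercover of simplicial spaces. Then the induced morphism $\mathrm{Map}(T,X)\to\mathrm{Map}(S\hookrightarrow T,f)$ is a cover.
   Context: A descent category is a small category $\mathcal V$ with a subcategory of morphisms called covers such that: $\mathcal V$ has finite limits; pullbacks of covers are covers; if $f$ and $g\circ f$ are covers then $g$ is a cover. A simplicial space is a simplicial object in $\mathcal V$. A finite simplicial set has finitely many nondegenerate simplices; $\mathrm{Map}(T,X)$ is the finite limit representing simplicial maps $T\to X$; $\mathrm{Map}(S\hookrightarrow T,f)=\mathrm{Map}(S,X)\times_{\mathrm{Map}(S,Y)}\mathrm{Map}(T,Y)$. A morphism $f:X\to Y$ is a hypercover if $X_n\to\mathrm{Map}(\partial\Delta^n\hookrightarrow\Delta^n,f)$ is a cover for all $n\ge0$. *)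

From Stdlib Require List.
From mathcomp Require Import all_boot.
Set Implicit Arguments. Unset Strict Implicit. Unset Printing Implicit Defensive.

Record category := Category {
  ob : Type;
  hom : ob -> ob -> Type;
  cid : forall A, hom A A;
  ccomp : forall A B D, hom B D -> hom A B -> hom A D;
  ccomp_id_l : forall A B (f : hom A B), ccomp (cid B) f = f;
  ccomp_id_r : forall A B (f : hom A B), ccomp f (cid A) = f;
  ccomp_assoc : forall A B D E (h : hom D E) (g : hom B D) (f : hom A B),
      ccomp h (ccomp g f) = ccomp (ccomp h g) f
}.
Arguments hom {c}. Arguments cid {c}. Arguments ccomp {c A B D}.

Section CatDefs.
Variable C : category.

Definition is_terminal (Tm : ob C) : Prop :=
  forall A : ob C, exists! u : hom A Tm, True.

Definition is_pullback (A B D : ob C) (f : hom A D) (g : hom B D)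
    (P : ob C) (p1 : hom P A) (p2 : hom P B) : Prop :=
  ccomp f p1 = ccomp g p2 /\
  forall (Q : ob C) (q1 : hom Q A) (q2 : hom Q B), ccomp f q1 = ccomp g q2 ->
    exists! u : hom Q P, ccomp p1 u = q1 /\ ccomp p2 u = q2.

Definition has_finite_limits : Prop :=
  (exists Tm : ob C, is_terminal Tm) /\
  (forall (A B D : ob C) (f : hom A D) (g : hom B D),
     exists (P : ob C) (p1 : hom P A) (p2 : hom P B), is_pullback f g p1 p2).

Definition descent_category (cover : forall A B : ob C, hom A B -> Prop) : Prop :=
  has_finite_limits /\
  (forall A, cover A A (cid A)) /\
  (forall A B D (f : hom A B) (g : hom B D),
      cover _ _ f -> cover _ _ g -> cover _ _ (ccomp g f)) /\
  (forall (A B D : ob C) (f : hom A D) (g : hom B D) (P : ob C)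
          (p1 : hom P A) (p2 : hom P B),
      is_pullback f g p1 p2 -> cover _ _ g -> cover _ _ p1) /\
  (forall A B D (f : hom A B) (g : hom B D),
      cover _ _ f -> cover _ _ (ccomp g f) -> cover _ _ g).
End CatDefs.

Definition monob m n (f : {ffun 'I_m.+1 -> 'I_n.+1}) : bool :=
  [forall i : 'I_m.+1, forall j : 'I_m.+1, (i <= j) ==> (f i <= f j)].
Definition Delta (m n : nat) := {f : {ffun 'I_m.+1 -> 'I_n.+1} | monob f}.

Lemma monob_id n : monob [ffun i : 'I_n.+1 => i].
Proof. by apply/forallP=> i; apply/forallP=> j; rewrite !ffunE; apply/implyP. Qed.
Definition did n : Delta n n := exist (fun f => is_true (monob f)) _ (monob_id n).

Lemma monob_comp m n p (g : Delta n p) (f : Delta m n) :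
  monob [ffun i => sval g (sval f i)].
Proof.
case: g f => g /forallP hg [f /forallP hf] /=.
apply/forallP=> i; apply/forallP=> j; apply/implyP=> hij; rewrite !ffunE.
move: (hf i) => /forallP /(_ j) /implyP /(_ hij) hfij.
by move: (hg (f i)) => /forallP /(_ (f j)) /implyP /(_ hfij).
Qed.
Definition dcomp m n p (g : Delta n p) (f : Delta m n) : Delta m p :=
  exist (fun f => is_true (monob f)) _ (monob_comp g f).

Definition surjb m n (t : Delta m n) : bool :=
  [forall j : 'I_n.+1, [exists i : 'I_m.+1, sval t i == j]].

Record sset := SSet {
  sx : nat -> Type;
  sact : forall m n, Delta m n -> sx n -> sx m;
  sact_id : forall n (x : sx n), sact (did n) x = x;
  sact_comp : forall m n p (g : Delta n p) (f : Delta m n) (x : sx p),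
      sact (dcomp g f) x = sact f (sact g x)
}.
Arguments sact s {m n}.

Definition nondegenerate (T : sset) n (x : sx T n) : Prop :=
  ~ exists m (t : Delta n m) (y : sx T m), (m < n) /\ surjb t /\ x = sact T t y.

Definition finite_sset (T : sset) : Prop :=
  exists l : seq {n : nat & sx T n},
    forall n (x : sx T n), nondegenerate x -> List.In (existT _ n x) l.

Definition sub_sset (T : sset) (S : forall n, sx T n -> Prop) : Prop :=
  forall m n (t : Delta m n) (x : sx T n), S n x -> S m (sact T t x).

Definition allS (T : sset) : forall n, sx T n -> Prop := fun _ _ => True.
Arguments allS : clear implicits.

Lemma dcomp_id_r m n (s : Delta m n) : dcomp s (did m) = s.
Proof. by apply: val_inj; apply/ffunP=> i; rewrite /= !ffunE. Qed.
Lemma dcomp_assoc m n p q (s : Delta p q) (g : Delta n p) (f : Delta m n) :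
  dcomp s (dcomp g f) = dcomp (dcomp s g) f.
Proof. by apply: val_inj; apply/ffunP=> i; rewrite /= !ffunE. Qed.

Definition DeltaS (n : nat) : sset :=
  @SSet (fun m => Delta m n) (fun m k t s => dcomp s t)
        (fun k s => dcomp_id_r s) (fun m k p g f s => dcomp_assoc s g f).

Definition boundary (n : nat) : forall m, sx (DeltaS n) m -> Prop :=
  fun m (s : Delta m n) => ~~ surjb s.
Arguments boundary : clear implicits.

Record sobj (C : category) := SObj {
  sob : nat -> ob C;
  sobact : forall m n, Delta m n -> hom (sob n) (sob m);
  sobact_id : forall n, sobact (did n) = cid (sob n);
  sobact_comp : forall m n p (g : Delta n p) (f : Delta m n),
      sobact (dcomp g f) = ccomp (sobact f) (sobact g)
}.
Arguments sob {C}. Arguments sobact {C} s {m n}.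

Record smorph (C : category) (X Y : sobj C) := SMorph {
  smap : forall n, hom (sob X n) (sob Y n);
  smap_nat : forall m n (t : Delta m n),
      ccomp (smap m) (sobact X t) = ccomp (sobact Y t) (smap n)
}.
Arguments smap {C X Y} s n.

Definition spred (T : sset) := forall n, sx T n -> Prop.

Section Cones.
Local Unset Implicit Arguments.
Variables (C : category) (T : sset) (P : spred T) (X : sobj C).

Definition cone (U : ob C) := forall n (x : sx T n), P n x -> hom U (sob X n).

(* compatibility = it is a simplicial map P -> Hom(U, X_.) *)
Definition cone_compat (U : ob C) (a : cone U) : Prop :=
  forall m n (t : Delta m n) (x : sx T n) (hx : P n x) (hy : P m (sact T t x)),
    ccomp (sobact X t) (a n x hx) = a m (sact T t x) hy.
End Cones.
Arguments cone {C T} P X U.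
Arguments cone_compat {C T P X U} a.

(* (M, c) is Map(T, X): it represents simplicial maps T -> X *)
Definition is_Map (C : category) (T : sset) (X : sobj C) (M : ob C)
    (c : cone (allS T) X M) : Prop :=
  cone_compat c /\
  forall (U : ob C) (a : cone (allS T) X U), cone_compat a ->
    exists! h : hom U M, forall n x hx, ccomp (c n x hx) h = a n x hx.

Definition rel_compat (C : category) (T : sset) (S : forall n, sx T n -> Prop)
    (X Y : sobj C) (f : smorph X Y) (U : ob C)
    (a : cone S X U) (b : cone (allS T) Y U) : Prop :=
  forall n x (hs : S n x) (ht : allS T n x), ccomp (smap f n) (a n x hs) = b n x ht.

(* (M, a, b) is Map(S -> T, f) = Map(S,X) x_{Map(S,Y)} Map(T,Y) *)
Definition is_MapRel (C : category) (T : sset) (S : forall n, sx T n -> Prop)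
    (X Y : sobj C) (f : smorph X Y) (M : ob C)
    (a : cone S X M) (b : cone (allS T) Y M) : Prop :=
  cone_compat a /\ cone_compat b /\ rel_compat f a b /\
  forall (U : ob C) (a' : cone S X U) (b' : cone (allS T) Y U),
    cone_compat a' -> cone_compat b' -> rel_compat f a' b' ->
    exists! h : hom U M,
      (forall n x hs, ccomp (a n x hs) h = a' n x hs) /\
      (forall n x ht, ccomp (b n x ht) h = b' n x ht).

(* hypercover: X_n -> Map(bd Delta^n -> Delta^n, f) is a cover for all n
   (X_n identified with Map(Delta^n, X) via Yoneda: sigma |-> X(sigma)) *)
Definition hypercover (C : category) (cover : forall A B : ob C, hom A B -> Prop)
    (X Y : sobj C) (f : smorph X Y) : Prop :=
  forall n (M : ob C) (a : cone (boundary n) X M) (b : cone (allS (DeltaS n)) Y M),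
    is_MapRel f a b ->
    forall phi : hom (sob X n) M,
      (forall m (s : Delta m n) hs, ccomp (a m s hs) phi = sobact X s) ->
      (forall m (s : Delta m n) ht, ccomp (b m s ht) phi = ccomp (sobact Y s) (smap f n)) ->
      cover _ _ phi.

(* Mapping objects are handled through the presheaves on [C] they represent.  Let [P] be a
   simplicial subset of [T] and [x] a nondegenerate [n]-simplex whose boundary lies in [P].
   Then [Map(P + x -> T, f)] is the pullback of the matching map
   [X_n -> Map(bd Delta^n -> Delta^n, f)], a cover since [f] is a hypercover, along the
   restriction [Map(P -> T, f) -> Map(bd Delta^n -> Delta^n, f)]; so restricting from [P + x]
   to [P] is a cover, and all these objects exist by finite limits (for the boundary terms by
   the same argument and induction on [n]).  As [T] is finite, it is reached from [S] by
   attaching its missing nondegenerate simplices in order of dimension, and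
   [Map(T, X) = Map(T -> T, f)]; composing the covers proves the claim. *)

From mathcomp Require Import all_boot zify.
From Stdlib Require Import Classical FunctionalExtensionality PropExtensionality.
From Stdlib Require Import ProofIrrelevance ClassicalEpsilon.
Set Implicit Arguments. Unset Strict Implicit. Unset Printing Implicit Defensive.

Lemma Delta_mono m n (t : Delta m n) (i j : 'I_m.+1) : i <= j -> sval t i <= sval t j.
Proof. by case: t => t /= /forallP/(_ i)/forallP/(_ j)/implyP. Qed.

Lemma Delta_ext m n (s t : Delta m n) : (forall i, sval s i = sval t i) -> s = t.
Proof. by move=> st; apply: val_inj; apply/ffunP. Qed.

Lemma monob_fun m n (f : 'I_m.+1 -> 'I_n.+1) :
  {homo f : i j / i <= j} -> monob [ffun i => f i].
Proof.
move=> fmono; apply/forallP=> i; apply/forallP=> j; apply/implyP.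
by rewrite !ffunE; apply: fmono.
Qed.

Definition mkDelta m n (f : 'I_m.+1 -> 'I_n.+1) (fmono : {homo f : i j / i <= j}) : Delta m n :=
  exist (fun g => is_true (monob g)) _ (monob_fun fmono).

Lemma mkDeltaE m n f fmono i : sval (@mkDelta m n f fmono) i = f i.
Proof. by rewrite /= ffunE. Qed.

Lemma dcompE m n p (g : Delta n p) (f : Delta m n) i : sval (dcomp g f) i = sval g (sval f i).
Proof. by rewrite /= ffunE. Qed.

Lemma didE n i : sval (did n) i = i.
Proof. by rewrite /= ffunE. Qed.

Lemma dcomp_id_l m n (s : Delta m n) : dcomp (did n) s = s.
Proof. by apply: Delta_ext=> i; rewrite dcompE didE. Qed.

Lemma surjbP m n (t : Delta m n) : reflect (forall j, exists i, sval t i = j) (surjb t).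
Proof.
apply: (iffP forallP) => [tsurj j | tsurj j].
  by have /existsP[i /eqP] := tsurj j; exists i.
by have [i ti] := tsurj j; apply/existsP; exists i; apply/eqP.
Qed.

Lemma surjb_id n : surjb (did n).
Proof. by apply/surjbP=> j; exists j; rewrite didE. Qed.

Lemma surjb_comp m n p (g : Delta n p) (f : Delta m n) : surjb g -> surjb f -> surjb (dcomp g f).
Proof.
move=> /surjbP gsurj /surjbP fsurj; apply/surjbP=> j.
have [k <-] := gsurj j; have [i <-] := fsurj k; exists i; exact: dcompE.
Qed.

Lemma surjb_compl m n p (g : Delta n p) (f : Delta m n) : surjb (dcomp g f) -> surjb g.
Proof.
move=> /surjbP gfsurj; apply/surjbP=> j.
by have [i <-] := gfsurj j; exists (sval f i); rewrite dcompE.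
Qed.

(* Any section of a monotone surjection is monotone. *)
Lemma surjb_section m n (t : Delta m n) (i : 'I_m.+1) : surjb t ->
  exists d : Delta n m, dcomp t d = did n /\ sval d (sval t i) = i.
Proof.
move=> /surjbP tsurj.
pose g j := if j == sval t i then i else odflt i [pick k | sval t k == j].
have tgK j : sval t (g j) = j.
  rewrite /g; case: eqP => [->//|_]; case: pickP => [k /eqP //|nofib].
  by have [k tk] := tsurj j; move: (nofib k); rewrite tk eqxx.
have gmono : {homo g : j1 j2 / j1 <= j2}.
  move=> j1 j2 j12; rewrite leqNgt; apply/negP=> g21.
  have := Delta_mono t (ltnW g21); rewrite !tgK => j21.
  suff j1E : j1 = j2 by move: g21; rewrite j1E ltnn.
  by apply: val_inj; apply/eqP; rewrite eqn_leq j12.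
exists (mkDelta gmono); split; first by apply: Delta_ext=> j; rewrite dcompE mkDeltaE tgK didE.
by rewrite mkDeltaE /g eqxx.
Qed.

Lemma surjb_endo_inj n (t : Delta n n) : surjb t -> injective (sval t).
Proof.
move=> /(surjb_section ord0) [d [td _]].
have tdK : cancel (sval d) (sval t) by move=> j; rewrite -dcompE td didE.
move=> i1 i2; have [j1 ->] := codomP (injF_onto (can_inj tdK) i1).
by have [j2 ->] := codomP (injF_onto (can_inj tdK) i2); rewrite !tdK => ->.
Qed.

(* By strong induction, [t] fixes every [j < i]; then a preimage of [i] is [>= i], so
   [t i <= i], and [t i < i] would contradict injectivity as [t (t i) = t i]. *)
Lemma surjb_endo_id n (t : Delta n n) : surjb t -> t = did n.
Proof.
move=> tsurj; have tinj := surjb_endo_inj tsurj; move/surjbP: tsurj => tsurj.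
suff tid : forall k (i : 'I_n.+1), i = k :> nat -> sval t i = i.
  by apply: Delta_ext=> i; rewrite didE (tid i).
elim/ltn_ind=> k IH i ik; subst k.
have ti_le : sval t i <= i.
  have [j tj] := tsurj i; rewrite -[X in _ <= val X]tj; apply: Delta_mono.
  by rewrite leqNgt; apply/negP=> ji; move: (ji); rewrite -tj (IH j ji j erefl) ltnn.
have ti_ge : i <= sval t i.
  rewrite leqNgt; apply/negP=> ti_lt.
  by move: (ti_lt); rewrite {1}(tinj _ _ (IH _ ti_lt _ erefl)) ltnn.
by apply: val_inj; apply/eqP; rewrite eqn_leq ti_le ti_ge.
Qed.

(* [degen] is the codegeneracy [s^p : [k+1] -> [k]] repeating [p], and [face] the coface
   [d^(p+1) : [k] -> [k+1]] skipping [p+1]. *)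
Section Degeneracy.
Variables (k : nat) (p : 'I_k.+1).

Definition degen_val (a : nat) := if a <= p then a else a.-1.
Definition face_val (a : nat) := if a <= p then a else a.+1.

Lemma degen_mono : {homo (fun a : 'I_k.+2 => inord (degen_val a) : 'I_k.+1) : a b / a <= b}.
Proof.
move=> a b ab; have := ltn_ord a; have := ltn_ord b; have := ltn_ord p.
rewrite /= /degen_val; case: (leqP a p); case: (leqP b p) => /= *; rewrite !inordK; lia.
Qed.

Lemma face_mono : {homo (fun a : 'I_k.+1 => inord (face_val a) : 'I_k.+2) : a b / a <= b}.
Proof.
move=> a b ab; have := ltn_ord a; have := ltn_ord b; have := ltn_ord p.
rewrite /= /face_val; case: (leqP a p); case: (leqP b p) => /= *; rewrite !inordK; lia.
Qed.

Definition degen : Delta k.+1 k := mkDelta degen_mono.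
Definition face : Delta k k.+1 := mkDelta face_mono.

Lemma degenE a : val (sval degen a) = degen_val a.
Proof.
have pk := ltn_ord p; have ak := ltn_ord a.
by rewrite mkDeltaE /= inordK // /degen_val; case: (leqP a p); lia.
Qed.

Lemma faceE a : val (sval face a) = face_val a.
Proof.
have pk := ltn_ord p; have ak := ltn_ord a.
by rewrite mkDeltaE /= inordK // /face_val; case: (leqP a p); lia.
Qed.

Lemma surjb_degen : surjb degen.
Proof.
apply/surjbP=> b; exists (sval face b); apply: val_inj.
by rewrite degenE faceE /degen_val /face_val; case: (leqP b p) => bp; rewrite ?bp // ifF //; lia.
Qed.

Lemma Delta_factor_degen n (r : Delta k.+1 n) :
  sval r (inord p) = sval r (inord p.+1) -> r = dcomp (dcomp r face) degen.
Proof.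
move=> rp; apply: Delta_ext=> a; rewrite !dcompE.
have [aE | ap] := eqVneq (nat_of_ord a) p.+1.
  have -> : a = inord p.+1 by apply: val_inj => /=; rewrite aE inordK // ltnS ltn_ord.
  rewrite -rp; congr (sval r _); apply: val_inj => /=.
  have pk := ltn_ord p.
  by rewrite faceE degenE /degen_val /face_val !inordK ?ltnS ?ltnn /= ?leqnn //; lia.
apply: congr1; apply: val_inj => /=; move: ap; rewrite faceE degenE /degen_val /face_val.
by case: (leqP a p) => /= ap; case: leqP; lia.
Qed.
End Degeneracy.

Lemma Delta_noninj_factor k n (r : Delta k n) (i j : 'I_k.+1) :
  i != j -> sval r i = sval r j ->
  exists k' (s : Delta k k') (r' : Delta k' n), [/\ k' < k, surjb s & r = dcomp r' s].
Proof.
wlog ij : i j / i < j.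
  move=> W ij rij; have [lt | gt | eq] := ltngtP i j.
  - exact: (W i j).
  - by apply: (W j i); rewrite // eq_sym.
  - by move: ij; rewrite (val_inj eq) eqxx.
case: k r i j ij => [|k] r i j ij _ rij; first by have := ltn_ord j; lia.
have ik : i < k.+1 by have := ltn_ord j; lia.
have rstep : sval r (inord (Ordinal ik)) = sval r (inord (Ordinal ik).+1).
  have -> : inord (Ordinal ik) = i by exact: inord_val.
  have ij1 : i.+1 < k.+2 by have := ltn_ord j; lia.
  apply: val_inj; apply/eqP; rewrite eqn_leq; apply/andP; split.
    by apply: Delta_mono; rewrite inordK.
  by rewrite rij; apply: Delta_mono; rewrite inordK.
exists k, (degen (Ordinal ik)), (dcomp r (face (Ordinal ik))).
by rewrite ltnSn surjb_degen -Delta_factor_degen.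
Qed.

Section SimplicialSet.
Variable T : sset.

Lemma nondegenerate_face_dim k n (r : Delta k n) (x : sx T n) :
  nondegenerate (sact T r x) -> ~~ surjb r -> k < n.
Proof.
move=> nd rnsurj; rewrite ltnNge; apply/negP=> nk.
have [/injectiveP rinj | /injectivePn [i [j ij rij]]] := boolP (injectiveb (sval r)).
  move/negP: rnsurj; apply; apply/surjbP=> j.
  have card_le : #|'I_n.+1| <= #|'I_k.+1| by rewrite !card_ord.
  by have /codomP[i ->] := inj_card_onto rinj card_le j; exists i.
have [k' [s [r' [k'k ssurj rE]]]] := Delta_noninj_factor ij rij.
by apply: nd; exists k', s, (sact T r' x); rewrite rE sact_comp.
Qed.

Lemma eilenberg_zilber n (z : sx T n) :
  exists m (t : Delta n m) (y : sx T m), [/\ surjb t, nondegenerate y & z = sact T t y].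
Proof.
elim/ltn_ind: n z => n IH z.
have [nd | /NNPP [m [t [y [mn [tsurj ->]]]]]] := classic (nondegenerate z).
  by exists n, (did n), z; rewrite surjb_id sact_id.
have [m' [t' [y' [t'surj y'nd ->]]]] := IH m mn y.
by exists m', (dcomp t' t), y'; rewrite surjb_comp // sact_comp.
Qed.

Lemma sub_sset_degen (P : spred T) (HP : sub_sset P) m n (t : Delta m n) (y : sx T n) :
  surjb t -> P m (sact T t y) -> P n y.
Proof.
move=> /(surjb_section ord0) [d [td _]] /(HP _ _ d).
by rewrite -sact_comp td sact_id.
Qed.

Definition subP (P Q : spred T) := forall n z, P n z -> Q n z.

Definition attach (P : spred T) n (x : sx T n) : spred T :=
  fun m z => P m z \/ exists t : Delta m n, z = sact T t x.

Lemma attach_self (P : spred T) n (x : sx T n) : attach P x x.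
Proof. by right; exists (did n); rewrite sact_id. Qed.

Lemma sub_sset_attach (P : spred T) (HP : sub_sset P) n (x : sx T n) : sub_sset (attach P x).
Proof.
move=> m k t z [Pz | [r ->]]; first by left; apply: HP.
by right; exists (dcomp r t); rewrite sact_comp.
Qed.

Lemma ex_minimal_nat (R : nat -> Prop) :
  (exists n, R n) -> exists n, R n /\ forall m, R m -> n <= m.
Proof.
move=> [n Rn]; elim/ltn_ind: n Rn => n IH Rn.
have [[m [Rm mn]] | nosmaller] := classic (exists m, R m /\ m < n); first exact: IH m mn Rm.
by exists n; split=> // m Rm; rewrite leqNgt; apply/negP=> mn; apply: nosmaller; exists m.
Qed.

Definition faces_in (P : spred T) n (x : sx T n) :=
  forall m (s : Delta m n), ~~ surjb s -> P m (sact T s x).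

(* A missing simplex of minimal dimension among the nondegenerate ones has all its
   proper faces in [P]: a missing face would be a degeneracy of a missing
   nondegenerate simplex of smaller dimension. *)
Lemma ex_minimal_missing (P Q : spred T) : sub_sset P -> sub_sset Q ->
  (exists n (z : sx T n), Q n z /\ ~ P n z) ->
  exists n (x : sx T n), [/\ Q n x, ~ P n x, nondegenerate x & faces_in P x].
Proof.
move=> HP HQ [n0 [z0 [Qz0 nPz0]]].
pose R d := exists x : sx T d, [/\ Q d x, ~ P d x & nondegenerate x].
have [d [[x [Qx nPx ndx]] dmin]] : exists d, R d /\ forall m, R m -> d <= m.
  apply: ex_minimal_nat; have [m [t [y [tsurj ynd z0E]]]] := eilenberg_zilber z0.
  exists m, y; split=> //; first by apply: (sub_sset_degen HQ tsurj); rewrite -z0E.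
  by move=> Py; apply: nPz0; rewrite z0E; apply: HP.
exists d, x; split=> // m s snsurj; apply: NNPP=> nPsx.
have [k [t [y [tsurj ynd sxE]]]] := eilenberg_zilber (sact T s x).
have [e [te _]] := surjb_section ord0 tsurj.
have yE : y = sact T (dcomp s e) x by rewrite sact_comp sxE -sact_comp te sact_id.
have kd : k < d.
  apply: (nondegenerate_face_dim (r := dcomp s e) (x := x)); first by rewrite -yE.
  by apply: contra snsurj; apply: surjb_compl.
suff : d <= k by rewrite leqNgt kd.
apply: dmin; exists y; split=> //.
  by rewrite yE; apply: HQ.
by move=> Py; apply: nPsx; rewrite sxE; apply: HP.
Qed.

(* The list [l] bounds the number of cells that remain to be attached. *)
Lemma sset_cell_induction (Q : spred T) (l : seq {n : nat & sx T n})
    (S : spred T) (Phi : spred T -> Prop) :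
  sub_sset Q -> (forall n (z : sx T n), Q n z -> nondegenerate z -> List.In (existT _ n z) l) ->
  sub_sset S -> subP S Q -> Phi S ->
  (forall (P : spred T) n (x : sx T n), sub_sset P -> subP S P -> Q n x ->
     nondegenerate x -> ~ P n x -> faces_in P x -> Phi P -> Phi (attach P x)) ->
  Phi Q.
Proof.
move=> HQ l_nondeg HS SQ PhiS step.
suff ind : forall k (l' : seq {n : nat & sx T n}) (P : spred T), size l' = k ->
    sub_sset P -> subP S P -> subP P Q -> Phi P ->
    (forall n (z : sx T n), Q n z -> nondegenerate z -> ~ P n z -> List.In (existT _ n z) l') ->
    Phi Q.
  by apply: (ind _ l S) => // n z Qz ndz _; apply: l_nondeg.
elim/ltn_ind=> k IH l' P l'k HP SP PQ PhiP l'_missing.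
have [missing | nomissing] := classic (exists n (z : sx T n), Q n z /\ ~ P n z); last first.
  suff -> : Q = P by [].
  apply: functional_extensionality_dep=> n; apply: functional_extensionality=> z.
  apply: propositional_extensionality; split=> [Qz | /PQ //].
  by apply: NNPP=> nPz; apply: nomissing; exists n, z.
have [n [x [Qx nPx ndx xfaces]]] := ex_minimal_missing HP HQ missing.
have [l1 [l2 l'E]] := List.in_split _ _ (l'_missing n x Qx ndx nPx).
apply: (IH (size (l1 ++ l2)) _ (l1 ++ l2) (attach P x)) => //.
- by rewrite -l'k l'E !size_cat /= addnS.
- exact: sub_sset_attach.
- by move=> m z /SP; left.
- by move=> m z [/PQ // | [t ->]]; apply: HQ.
- exact: step.
move=> m z Qz ndz nAz.
have := l'_missing m z Qz ndz (fun Pz => nAz (or_introl Pz)).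
rewrite l'E => z_in; apply: List.in_or_app.
case: (List.in_app_or _ _ _ z_in) => [zl1 | [xz | zl2]]; [by left | | by right].
case: nAz; change (attach P x (projT2 (existT (sx T) m z))).
by rewrite -xz; apply: attach_self.
Qed.
End SimplicialSet.

Lemma sig_ext A (P : A -> Prop) (x y : {a | P a}) : sval x = sval y -> x = y.
Proof. by case: x y => [a Pa] [b Pb] /= ab; subst b; congr exist; apply: proof_irrelevance. Qed.

Section Presheaf.
Variable C : category.

Record psh := Psh {
  pt : ob C -> Type;
  pres : forall U V : ob C, hom V U -> pt U -> pt V;
  pres_id : forall U p, pres (cid U) p = p;
  pres_comp : forall U V W (g : hom V U) (h : hom W V) p, pres (ccomp g h) p = pres h (pres g p)
}.
Arguments pt : clear implicits.
Arguments pres F {U V} h p : rename.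

Definition represents (F : psh) (M : ob C) (e : pt F M) :=
  forall U (p : pt F U), exists! h : hom U M, pres F h e = p.

Definition representable (F : psh) := exists M (e : pt F M), represents e.

Definition natural (F G : psh) (eta : forall U, pt F U -> pt G U) :=
  forall U V (h : hom V U) p, eta V (pres F h p) = pres G h (eta U p).

Definition natural_iso (F G : psh) (eta : forall U, pt F U -> pt G U)
    (eps : forall U, pt G U -> pt F U) :=
  [/\ natural eta, forall U, cancel (eta U) (eps U) & forall U, cancel (eps U) (eta U)].

Lemma natural_iso_sym F G eta eps : @natural_iso F G eta eps -> natural_iso eps eta.
Proof. by case=> eta_nat etaK epsK; split=> // U V h q; rewrite -{1}(epsK U q) -eta_nat etaK. Qed.

Lemma represents_uniq F M (e : pt F M) U (h h' : hom U M) :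
  represents e -> pres F h e = pres F h' e -> h = h'.
Proof.
by move=> Re hh'; have [u [_ uniq_u]] := Re U (pres F h' e); rewrite -(uniq_u h hh') (uniq_u h').
Qed.

Lemma represents_ex F M (e : pt F M) U (p : pt F U) :
  represents e -> exists h : hom U M, pres F h e = p.
Proof. by move=> Re; have [h [he _]] := Re U p; exists h. Qed.

Lemma represents_natural_iso F G eta eps M (e : pt F M) :
  @natural_iso F G eta eps -> represents e -> represents (eta M e).
Proof.
case=> eta_nat etaK epsK Re U q; have [h [he uniq_h]] := Re U (eps U q).
exists h; split; first by rewrite -eta_nat he epsK.
by move=> h' h'e; apply: uniq_h; rewrite -(etaK _ (pres F h' e)) eta_nat h'e.
Qed.

Lemma representable_natural_iso F G eta eps :
  @natural_iso F G eta eps -> representable F -> representable G.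
Proof. by move=> iso [M [e Re]]; exists M, (eta M e); apply: represents_natural_iso iso Re. Qed.

Definition yo (A : ob C) : psh.
Proof.
refine (@Psh (fun U => hom U A) (fun U V h g => ccomp g h) _ _).
- by move=> U p; rewrite ccomp_id_r.
- by move=> U V W g h p; rewrite ccomp_assoc.
Defined.

Lemma yo_represents A : represents (cid A : pt (yo A) A).
Proof. by move=> U p; exists p; split=> [|h]; rewrite /= ccomp_id_l. Qed.

Lemma yo_representable A : representable (yo A).
Proof. by exists A, (cid A); apply: yo_represents. Qed.

Section Pullback.
Variables (F G H : psh) (eta : forall U, pt F U -> pt H U) (theta : forall U, pt G U -> pt H U).
Arguments eta : clear implicits.
Arguments theta : clear implicits.
Hypotheses (eta_nat : natural eta) (theta_nat : natural theta).

Definition PBpt U := {pq : pt F U * pt G U | eta U pq.1 = theta U pq.2}.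

Definition PBres U V (h : hom V U) (x : PBpt U) : PBpt V.
Proof.
by exists (pres F h (sval x).1, pres G h (sval x).2); rewrite /= eta_nat theta_nat (svalP x).
Defined.

Lemma PBres_id U p : PBres (cid U) p = p.
Proof. by apply: sig_ext; rewrite /= !pres_id; case: (sval p). Qed.

Lemma PBres_comp U V W (g : hom V U) (h : hom W V) p : PBres (ccomp g h) p = PBres h (PBres g p).
Proof. by apply: sig_ext; rewrite /= !pres_comp. Qed.

Definition PB : psh := Psh PBres_id PBres_comp.

Definition PBproj2 U (x : pt PB U) : pt G U := (sval x).2.

Lemma PBproj2_natural : natural PBproj2.
Proof. by []. Qed.

Lemma represents_PB A (eA : pt F A) B (eB : pt G B) D (eD : pt H D)
    (fA : hom A D) (gB : hom B D) P (p1 : hom P B) (p2 : hom P A) :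
  represents eA -> represents eB -> represents eD ->
  pres H fA eD = eta A eA -> pres H gB eD = theta B eB -> is_pullback gB fA p1 p2 ->
  exists e : pt PB P, represents e /\ PBproj2 e = pres G p1 eB.
Proof.
move=> RA RB RD fAE gBE [p12 p_univ].
have eE : eta P (pres F p2 eA) = theta P (pres G p1 eB).
  by rewrite eta_nat theta_nat -fAE -gBE -!pres_comp p12.
exists (exist _ (pres F p2 eA, pres G p1 eB) eE); split=> // U [[p q] /= pqE].
have [hp hpE] := represents_ex p RA; have [hq hqE] := represents_ex q RB.
have hpq : ccomp gB hq = ccomp fA hp.
  by apply: (represents_uniq RD); rewrite !pres_comp fAE gBE -eta_nat -theta_nat hpE hqE.
have [u [[u1 u2] uniq_u]] := p_univ U hq hp hpq.
exists u; split; first by apply: sig_ext; rewrite /= -!pres_comp u1 u2 hpE hqE.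
move=> u' /(congr1 sval) /= [u'2 u'1]; apply: uniq_u; split.
  by apply: (represents_uniq RB); rewrite pres_comp u'1 hqE.
by apply: (represents_uniq RA); rewrite pres_comp u'2 hpE.
Qed.
End Pullback.
End Presheaf.
Arguments pt {C} _ _.
Arguments pres {C} _ {U V} _ _.
Arguments PBproj2 {C F G H eta theta} eta_nat theta_nat U x.
Arguments PBproj2_natural {C F G H eta theta} eta_nat theta_nat _ _ _ _.

Section Covering.
Variables (C : category) (cover : forall A B : ob C, hom A B -> Prop).
Hypothesis HC : descent_category cover.

Lemma cover_id A : cover (cid A).
Proof. by case: HC => _ []. Qed.

Lemma cover_comp A B D (f : hom A B) (g : hom B D) : cover f -> cover g -> cover (ccomp g f).
Proof. by case: HC => _ [_ [comp _]]; apply: comp. Qed.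

Lemma cover_pullback A B D (f : hom A D) (g : hom B D) P (p1 : hom P A) (p2 : hom P B) :
  is_pullback f g p1 p2 -> cover g -> cover p1.
Proof. by case: HC => _ [_ [_ [pb _]]]; apply: pb. Qed.

(* An isomorphism is the pullback of the identity along itself. *)
Lemma iso_cover A B (i : hom A B) (k : hom B A) :
  ccomp i k = cid B -> ccomp k i = cid A -> cover i.
Proof.
move=> ik ki; apply: (@cover_pullback _ _ _ (cid B) (cid B) _ i i); last exact: cover_id.
split=> // Q q1 q2; rewrite !ccomp_id_l => <-.
exists (ccomp k q1); split; first by rewrite ccomp_assoc ik ccomp_id_l.
by move=> u [<- _]; rewrite ccomp_assoc ki ccomp_id_l.
Qed.

Lemma represents_cover (F : psh C) M (e : pt F M) M' (e' : pt F M') (i : hom M' M) :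
  represents e -> represents e' -> pres F i e = e' -> cover i.
Proof.
move=> Re Re' ie; have [k ke'] := represents_ex e Re'.
apply: (iso_cover (k := k)).
  by apply: (represents_uniq Re); rewrite pres_comp ie ke' pres_id.
by apply: (represents_uniq Re'); rewrite pres_comp ke' ie pres_id.
Qed.

(* By [covering_of_cover], it suffices to check one choice of representing objects. *)
Definition covering (F G : psh C) (eta : forall U, pt F U -> pt G U) :=
  forall M (e : pt F M) N (e' : pt G N) (h : hom M N),
    represents e -> represents e' -> pres G h e' = eta M e -> cover h.

Lemma covering_of_cover (F G : psh C) eta M (e : pt F M) N (e' : pt G N) (h : hom M N) :
  natural eta -> represents e -> represents e' -> pres G h e' = eta M e -> cover h ->
  covering eta.
Proof.
move=> eta_nat Re Re' he' h_cover M1 e1 N1 e1' h1 Re1 Re1' h1e1'.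
have [i ie] := represents_ex e1 Re; have [j je'] := represents_ex e' Re1'.
have -> : h1 = ccomp j (ccomp h i).
  by apply: (represents_uniq Re1'); rewrite h1e1' !pres_comp je' he' -eta_nat ie.
apply: cover_comp; last exact: represents_cover Re1' Re' je'.
by apply: cover_comp h_cover; apply: represents_cover Re Re1 ie.
Qed.

Lemma covering_natural_iso (F G : psh C) eta eps :
  natural_iso eta eps -> representable F -> @covering F G eta.
Proof.
move=> iso [M [e Re]]; have [eta_nat _ _] := iso.
apply: (@covering_of_cover _ _ _ M e M (eta M e) (cid M)) => //; last exact: cover_id.
- exact: represents_natural_iso iso Re.
- by rewrite pres_id.
Qed.

Lemma covering_comp (F G H : psh C) eta theta :
  natural eta -> natural theta -> representable F -> representable G -> representable H ->
  @covering F G eta -> @covering G H theta -> covering (fun U p => theta U (eta U p)).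
Proof.
move=> eta_nat theta_nat [M [e Re]] [N [e' Re']] [K [e'' Re'']] eta_cov theta_cov.
have [h1 h1e'] := represents_ex (eta M e) Re'; have [h2 h2e''] := represents_ex (theta N e') Re''.
apply: (@covering_of_cover _ _ _ M e K e'' (ccomp h2 h1)) => //.
- by move=> U V h p; rewrite eta_nat theta_nat.
- by rewrite pres_comp h2e'' -theta_nat h1e'.
- by apply: cover_comp; [apply: eta_cov h1e' | apply: theta_cov h2e''].
Qed.

Lemma covering_ext (F G : psh C) (eta eta' : forall U, pt F U -> pt G U) :
  (forall U p, eta U p = eta' U p) -> covering eta -> covering eta'.
Proof. by move=> etaE eta_cov M e N e' h Re Re' he'; apply: eta_cov Re Re' _; rewrite he'. Qed.

Lemma representable_PB (F G H : psh C) (eta : forall U, pt F U -> pt H U)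
    (theta : forall U, pt G U -> pt H U) (eta_nat : natural eta) (theta_nat : natural theta) :
  representable F -> representable G -> representable H -> representable (PB eta_nat theta_nat).
Proof.
move=> [A [eA RA]] [B [eB RB]] [D [eD RD]].
have [fA fAE] := represents_ex (eta A eA) RD; have [gB gBE] := represents_ex (theta B eB) RD.
have [[_ pullbacks] _] := HC; have [P [p1 [p2 pb]]] := pullbacks _ _ _ gB fA.
have [e [Re _]] := represents_PB eta_nat theta_nat RA RB RD fAE gBE pb.
by exists P, e.
Qed.

Lemma covering_PBproj2 (F G H : psh C) (eta : forall U, pt F U -> pt H U)
    (theta : forall U, pt G U -> pt H U) (eta_nat : natural eta) (theta_nat : natural theta) :
  representable F -> representable G -> representable H ->
  covering eta -> covering (PBproj2 eta_nat theta_nat).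
Proof.
move=> [A [eA RA]] [B [eB RB]] [D [eD RD]] eta_cov.
have [fA fAE] := represents_ex (eta A eA) RD; have [gB gBE] := represents_ex (theta B eB) RD.
have [[_ pullbacks] _] := HC; have [P [p1 [p2 pb]]] := pullbacks _ _ _ gB fA.
have [e [Re eE]] := represents_PB eta_nat theta_nat RA RB RD fAE gBE pb.
apply: (covering_of_cover (PBproj2_natural eta_nat theta_nat) Re RB (esym eE)).
by apply: cover_pullback pb _; apply: eta_cov fAE.
Qed.
End Covering.

Section RelativeCones.
Variables (C : category) (T : sset) (X Y : sobj C) (f : smorph X Y).

Lemma cone_ext (P : spred T) (Z : sobj C) U (a a' : cone P Z U) :
  (forall n x hx, a n x hx = a' n x hx) -> a = a'.
Proof.
move=> aa'; apply: functional_extensionality_dep=> n.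
by apply: functional_extensionality_dep=> x; apply: functional_extensionality_dep.
Qed.

Lemma cone_congr (P : spred T) (Z : sobj C) U (a : cone P Z U) m (z z' : sx T m) hz hz' :
  z = z' -> a m z hz = a m z' hz'.
Proof. by move=> zz'; subst z'; f_equal; apply: proof_irrelevance. Qed.

Definition relcone (P : spred T) U :=
  {ab : cone P X U * cone (allS T) Y U |
    [/\ cone_compat ab.1, cone_compat ab.2 & rel_compat f ab.1 ab.2]}.

Definition relcone_res (P : spred T) U V (h : hom V U) (ab : relcone P U) : relcone P V.
Proof.
exists (fun n x hx => ccomp ((sval ab).1 n x hx) h, fun n x hx => ccomp ((sval ab).2 n x hx) h).
case: ab => [[a b] /= [a_compat b_compat ab_rel]]; split=> /=.
- by move=> m k t z hz hy; rewrite ccomp_assoc a_compat.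
- by move=> m k t z hz hy; rewrite ccomp_assoc b_compat.
- by move=> n x hs ht; rewrite ccomp_assoc ab_rel.
Defined.

Lemma relcone_res_id P U ab : @relcone_res P U U (cid U) ab = ab.
Proof.
by apply: sig_ext; case: ab => [[a b] _] /=; congr pair; apply: cone_ext=> n x hx;
  rewrite ccomp_id_r.
Qed.

Lemma relcone_res_comp P U V W (g : hom V U) (h : hom W V) ab :
  @relcone_res P U W (ccomp g h) ab = relcone_res h (relcone_res g ab).
Proof.
by apply: sig_ext; case: ab => [[a b] _] /=; congr pair; apply: cone_ext=> n x hx;
  rewrite ccomp_assoc.
Qed.

(* [RelP P] is the functor represented by [Map(P -> T, f)]. *)
Definition RelP (P : spred T) : psh C := Psh (@relcone_res_id P) (@relcone_res_comp P).

Definition MapRel_pt (P : spred T) M (a : cone P X M) (b : cone (allS T) Y M)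
  (Hab : is_MapRel f a b) : pt (RelP P) M.
Proof. by exists (a, b); case: Hab => [? [? []]]. Defined.

Lemma is_MapRel_represents P M a b (Hab : is_MapRel f a b) : represents (@MapRel_pt P M a b Hab).
Proof.
have [_ [_ [_ univ]]] := Hab; move=> U [[a' b'] /= [a'_compat b'_compat a'b'_rel]].
have [h [[ha hb] uniq_h]] := univ U a' b' a'_compat b'_compat a'b'_rel.
exists h; split; first by apply: sig_ext; congr pair; apply: cone_ext.
by move=> h' /(congr1 sval) [h'a h'b]; apply: uniq_h; split=> n x hx; rewrite -?h'a -?h'b.
Qed.

Lemma represents_is_MapRel P M (e : pt (RelP P) M) :
  represents e -> is_MapRel f (sval e).1 (sval e).2.
Proof.
case: e => [[a b] [a_compat b_compat ab_rel]] /= Re.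
split=> //; split=> //; split=> // U a' b' a'_compat b'_compat a'b'_rel.
have [h [he uniq_h]] := Re U (exist _ (a', b') (And3 a'_compat b'_compat a'b'_rel)).
exists h; split; first by move: he => /(congr1 sval) [ha hb]; split=> n x hx; rewrite -?ha -?hb.
by move=> h' [ha hb]; apply: uniq_h; apply: sig_ext; congr pair; apply: cone_ext.
Qed.

(* [Map(T, X)] also represents [RelP (allS T)], the [Y]-part being forced. *)
Definition Map_pt M (c : cone (allS T) X M) (Hc : is_Map c) : pt (RelP (allS T)) M.
Proof.
exists (c, fun n x hx => ccomp (smap f n) (c n x hx)); case: Hc => c_compat _; split=> //=.
- by move=> m n t x hx hy; rewrite ccomp_assoc -smap_nat -ccomp_assoc c_compat.
- by move=> n x [] [].
Defined.

Lemma is_Map_represents M c (Hc : is_Map c) : represents (@Map_pt M c Hc).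
Proof.
have [_ univ] := Hc; move=> U [[a b] ab_prop]; have [/= a_compat _ ab_rel] := ab_prop.
have [h [ha uniq_h]] := univ U a a_compat.
exists h; split.
  apply: sig_ext; congr pair; apply: cone_ext=> n x [] /=; first exact: ha.
  by rewrite -ccomp_assoc ha; apply: ab_rel.
by move=> h' /(congr1 sval) [h'a _]; apply: uniq_h=> n x hx; rewrite -h'a.
Qed.

Section Restriction.
Variables (P Q : spred T) (PQ : subP P Q).

Definition rel_restr U (ab : pt (RelP Q) U) : pt (RelP P) U.
Proof.
exists (fun n x hx => (sval ab).1 n x (PQ hx), (sval ab).2).
by case: ab => [[a b] [a_compat b_compat ab_rel]]; split=> //=.
Defined.

Lemma rel_restr_natural : natural rel_restr.
Proof. by move=> U V h ab; apply: sig_ext. Qed.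
End Restriction.

Lemma rel_restr_refl (P : spred T) (PP : subP P P) U (ab : pt (RelP P) U) : rel_restr PP ab = ab.
Proof.
by apply: sig_ext; case: ab => [[a b] _] /=; congr pair; apply: cone_ext=> n x hx;
  apply: cone_congr.
Qed.

Lemma rel_restr_comp (P Q R : spred T) (PQ : subP P Q) (QR : subP Q R) (PR : subP P R) U
    (ab : pt (RelP R) U) : rel_restr PQ (rel_restr QR ab) = rel_restr PR ab.
Proof. by apply: sig_ext; congr pair; apply: cone_ext=> n x hx /=; apply: cone_congr. Qed.

Lemma covering_rel_restr_refl cover (HC : descent_category cover) (P : spred T) (PP : subP P P) :
  representable (RelP P) -> covering cover (rel_restr PP).
Proof.
apply: covering_natural_iso => //; split; first exact: rel_restr_natural.
all: by move=> U ab; rewrite !rel_restr_refl.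
Qed.
End RelativeCones.

Section CellCones.
Variables (C : category) (T : sset) (n : nat) (x : sx T n).

Definition yocone (Q : spred (DeltaS n)) (Z : sobj C) U (v : hom U (sob Z n)) : cone Q Z U :=
  fun m s _ => ccomp (sobact Z s) v.

Lemma yocone_compat Q Z U (v : hom U (sob Z n)) : cone_compat (yocone (Q := Q) v).
Proof. by move=> k m r s hs hy; rewrite /yocone ccomp_assoc sobact_comp. Qed.

Definition cone_along (Q : spred (DeltaS n)) (P : spred T)
    (QP : forall m (s : Delta m n), Q m s -> P m (sact T s x)) (Z : sobj C) U (a : cone P Z U) :
  cone Q Z U := fun m s hs => a m (sact T s x) (QP m s hs).

Lemma cone_along_compat (Q : spred (DeltaS n)) (P : spred T)
    (QP : forall m (s : Delta m n), Q m s -> P m (sact T s x)) Z U (a : cone P Z U) :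
  cone_compat a -> cone_compat (cone_along QP a).
Proof.
move=> a_compat k m r s hs hy.
have Prsx : P k (sact T r (sact T s x)) by rewrite -sact_comp; apply: QP hy.
by rewrite /cone_along (a_compat _ _ r _ _ Prsx); apply: cone_congr; rewrite /= sact_comp.
Qed.
End CellCones.
Arguments yocone {C n} Q {Z U} v.

Section AttachCell.
Variables (C : category) (T : sset) (X Y : sobj C) (f : smorph X Y).
Variables (P : spred T) (n : nat) (x : sx T n).
Arguments P : clear implicits.
Hypotheses (HP : sub_sset P) (nPx : ~ P n x) (x_faces : faces_in P x).

Lemma cell_index_uniq m (t t' : Delta m n) :
  sact T t x = sact T t' x -> ~ P m (sact T t x) -> t = t'.
Proof.
move=> tt' nPtx.
have surj_of_nP k (s : Delta k n) : ~ P k (sact T s x) -> surjb s.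
  by move=> nPsx; apply: contraT=> /x_faces.
have tsurj := surj_of_nP _ _ nPtx.
apply: Delta_ext=> i; have [d [td di]] := surjb_section i tsurj.
have xE : sact T (dcomp t' d) x = x by rewrite sact_comp -tt' -sact_comp td sact_id.
have t'd_surj : surjb (dcomp t' d) by apply: surj_of_nP; rewrite xE.
by rewrite -[X in _ = sval t' X]di -dcompE (surjb_endo_id t'd_surj) didE.
Qed.

Lemma attach_cell m (z : sx T m) : attach P x z -> ~ P m z -> exists t : Delta m n, z = sact T t x.
Proof. by case. Qed.

Definition cell_index m (z : sx T m) (H : exists t : Delta m n, z = sact T t x) : Delta m n :=
  sval (constructive_indefinite_description _ H).

Lemma cell_indexP m (z : sx T m) H : z = sact T (@cell_index m z H) x.
Proof. exact: (svalP (constructive_indefinite_description _ H)). Qed.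

(* Off [P], a simplex of [attach P x] is [t^* x] for a unique [t] (by [cell_index_uniq]);
   it is sent to [X(t) \o u]. *)
Definition extend U (a : cone P X U) (u : hom U (sob X n)) : cone (attach P x) X U :=
  fun m z hz => match excluded_middle_informative (P m z) with
   | left Pz => a m z Pz
   | right nPz => ccomp (sobact X (cell_index (attach_cell hz nPz))) u
   end.

Lemma extend_P U a u m (z : sx T m) (hz : attach P x z) (Pz : P m z) :
  @extend U a u m z hz = a m z Pz.
Proof. by rewrite /extend; case: excluded_middle_informative => [?|//]; apply: cone_congr. Qed.

Section ExtendCompatible.
Variables (U : ob C) (a : cone P X U) (u : hom U (sob X n)).
Arguments a : clear implicits.
Hypothesis a_compat : cone_compat a.
Hypothesis u_faces : forall m (s : Delta m n) (hs : ~~ surjb s),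
  ccomp (sobact X s) u = a m (sact T s x) (x_faces hs).

Lemma extend_cell m (z : sx T m) (t : Delta m n) (hz : attach P x z) :
  z = sact T t x -> extend a u hz = ccomp (sobact X t) u.
Proof.
move=> zE; rewrite /extend; case: excluded_middle_informative => [Pz | nPz].
  have [tsurj | tnsurj] := boolP (surjb t).
    by case: nPx; apply: (sub_sset_degen HP tsurj); rewrite -zE.
  by rewrite u_faces; apply: cone_congr.
have zE' := cell_indexP (attach_cell hz nPz).
by rewrite (@cell_index_uniq _ _ t (etrans (esym zE') zE)) // -zE'.
Qed.

Lemma extend_compat : cone_compat (extend a u).
Proof.
move=> k m r z hz hy; have [Pz | nPz] := classic (P m z).
  by rewrite (extend_P _ _ _ Pz) (extend_P _ _ _ (HP r Pz)); apply: a_compat.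
have [t zE] := attach_cell hz nPz.
rewrite (extend_cell _ zE) (@extend_cell _ _ (dcomp t r)); last by rewrite sact_comp zE.
by rewrite sobact_comp ccomp_assoc.
Qed.
End ExtendCompatible.

Definition matching_map U (u : pt (yo (sob X n)) U) : pt (RelP (T := DeltaS n) f (boundary n)) U.
Proof.
exists (yocone (boundary n) u, yocone (allS (DeltaS n)) (ccomp (smap f n) u)).
split=> /=; try exact: yocone_compat.
by move=> m s hs ht; rewrite /yocone ccomp_assoc smap_nat -ccomp_assoc.
Defined.

Lemma matching_map_natural : natural matching_map.
Proof.
by move=> U V h u; apply: sig_ext; congr pair; apply: cone_ext=> m s hs;
  rewrite /= /yocone !ccomp_assoc.
Qed.

Definition cell_boundary U (ab : pt (RelP f P) U) : pt (RelP (T := DeltaS n) f (boundary n)) U.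
Proof.
exists (cone_along x_faces (sval ab).1, cone_along (x := x) (fun _ _ _ => I) (sval ab).2).
case: ab => [[a b] [a_compat b_compat ab_rel]]; split=> /=; try exact: cone_along_compat.
by move=> m s hs ht; apply: ab_rel.
Defined.

Lemma cell_boundary_natural : natural cell_boundary.
Proof. by move=> U V h ab; apply: sig_ext. Qed.

Definition cell_PB := PB matching_map_natural cell_boundary_natural.

Lemma cell_PB_faces U (q : pt cell_PB U) m (s : Delta m n) (hs : ~~ surjb s) :
  ccomp (sobact X s) (sval q).1 = (sval (sval q).2).1 m (sact T s x) (x_faces hs).
Proof. exact: (congr1 (fun w => (sval w).1 m s hs) (svalP q)). Qed.

Lemma cell_PB_cells U (q : pt cell_PB U) m (t : Delta m n) :
  ccomp (sobact Y t) (ccomp (smap f n) (sval q).1) = (sval (sval q).2).2 m (sact T t x) I.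
Proof. exact: (congr1 (fun w => (sval w).2 m t I) (svalP q)). Qed.

Lemma subP_attach : subP P (attach P x).
Proof. by move=> m z Pz; left. Qed.

Definition attach_to_PB U (ab : pt (RelP f (attach P x)) U) : pt cell_PB U.
Proof.
exists ((sval ab).1 n x (attach_self P x), rel_restr subP_attach ab).
case: ab => [[a b] [a_compat b_compat ab_rel]]; apply: sig_ext; congr pair.
  by apply: cone_ext=> m s hs /=; apply: a_compat.
by apply: cone_ext=> m s hs /=; rewrite /yocone (ab_rel _ _ _ I); apply: b_compat.
Defined.

Definition PB_to_attach U (q : pt cell_PB U) : pt (RelP f (attach P x)) U.
Proof.
exists (extend (sval (sval q).2).1 (sval q).1, (sval (sval q).2).2).
have u_faces := cell_PB_faces q; have u_cells := cell_PB_cells q.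
move: u_faces u_cells; case: q => [[u [[a b] [a_compat b_compat ab_rel]]] /= _] u_faces u_cells.
split=> //=; first exact: extend_compat.
move=> m z hz ht; have [Pz | nPz] := classic (P m z).
  by rewrite (extend_P _ _ _ Pz); apply: ab_rel.
have [t zE] := attach_cell hz nPz.
rewrite (extend_cell u_faces _ zE) ccomp_assoc smap_nat -ccomp_assoc u_cells.
by apply: cone_congr.
Defined.

Lemma attach_PB_natural_iso : natural_iso attach_to_PB PB_to_attach.
Proof.
split.
- by move=> U V h ab; apply: sig_ext; congr pair; apply: sig_ext.
- move=> U ab; have u_faces := cell_PB_faces (attach_to_PB ab); move: u_faces.
  case: ab => [[a b] [a_compat b_compat ab_rel]] /= u_faces; apply: sig_ext; congr pair.
  apply: cone_ext=> m z hz /=; have [Pz | nPz] := classic (P m z).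
    by rewrite (extend_P _ _ _ Pz); apply: cone_congr.
  have [t zE] := attach_cell hz nPz.
  rewrite (extend_cell u_faces _ zE).
  by rewrite (a_compat _ _ t x _ (eq_rect_r _ hz (esym zE))); apply: cone_congr.
- move=> U q; have u_faces := cell_PB_faces q; move: u_faces.
  case: q => [[u [[a b] ab_prop]] /= qE] u_faces; apply: sig_ext; congr pair => /=.
    by rewrite (extend_cell u_faces _ (esym (sact_id x))) sobact_id ccomp_id_l.
  by apply: sig_ext; congr pair; apply: cone_ext=> m z Pz /=; rewrite (extend_P _ _ _ Pz).
Qed.

Variables (cover : forall A B : ob C, hom A B -> Prop) (HC : descent_category cover).
Hypotheses (P_rep : representable (RelP f P))
  (boundary_rep : representable (RelP (T := DeltaS n) f (boundary n))).

Lemma representable_cell_PB : representable cell_PB.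
Proof.
exact: (representable_PB HC matching_map_natural cell_boundary_natural (yo_representable _)
  P_rep boundary_rep).
Qed.

Lemma representable_attach : representable (RelP f (attach P x)).
Proof.
exact: representable_natural_iso (natural_iso_sym attach_PB_natural_iso) representable_cell_PB.
Qed.

Lemma covering_restr_attach :
  covering cover matching_map -> covering cover (rel_restr (f := f) subP_attach).
Proof.
move=> matching_cov.
have [attach_nat _ _] := attach_PB_natural_iso.
apply: (covering_ext (eta := fun U ab => PBproj2 _ _ U (attach_to_PB ab))) => //.
apply: (covering_comp HC attach_nat (PBproj2_natural _ _) representable_attach
  representable_cell_PB P_rep).
  exact: (covering_natural_iso HC attach_PB_natural_iso representable_attach).
exact: (covering_PBproj2 HC (yo_representable _) P_rep boundary_rep matching_cov).
Qed.
End AttachCell.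

Definition emptyS (T : sset) : spred T := fun _ _ => False.
Arguments emptyS : clear implicits.

Lemma In_mem (A : eqType) (s : seq A) (a : A) : a \in s -> List.In a s.
Proof. by elim: s => [//|b s IH]; rewrite in_cons => /orP [/eqP -> | /IH]; [left | right]. Qed.

Section Hypercover.
Variables (C : category) (cover : forall A B : ob C, hom A B -> Prop).
Hypothesis HC : descent_category cover.
Variables (X Y : sobj C) (f : smorph X Y).

Section Simplex.
Variable n : nat.

Definition empty_cone (Z : sobj C) U : cone (emptyS (DeltaS n)) Z U :=
  fun m s (hs : False) => match hs with end.

Definition yo_to_rel_empty U (v : pt (yo (sob Y n)) U) : pt (RelP f (emptyS (DeltaS n))) U.
Proof.
exists (empty_cone X U, yocone (allS (DeltaS n)) v).
by split; [move=> ? ? ? ? [] | exact: yocone_compat | move=> ? ? []].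
Defined.

Definition rel_empty_to_yo U (ab : pt (RelP f (emptyS (DeltaS n))) U) : pt (yo (sob Y n)) U :=
  (sval ab).2 n (did n) I.

(* [Map(empty -> Delta^n, f) = Map(Delta^n, Y) = Y_n] by Yoneda. *)
Lemma yo_rel_empty_natural_iso : natural_iso yo_to_rel_empty rel_empty_to_yo.
Proof.
split.
- by move=> U V h v; apply: sig_ext; congr pair; apply: cone_ext=> m s hs //=;
  rewrite /yocone ccomp_assoc.
- by move=> U v; rewrite /rel_empty_to_yo /= /yocone sobact_id ccomp_id_l.
move=> U [[a b] ab_prop]; have [_ b_compat _] := ab_prop; apply: sig_ext; congr pair;
  apply: cone_ext=> m s //= hs.
by rewrite /rel_empty_to_yo /yocone /= b_compat; apply: cone_congr; rewrite /= dcomp_id_l.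
Qed.

Lemma representable_rel_empty : representable (RelP f (emptyS (DeltaS n))).
Proof. exact: representable_natural_iso yo_rel_empty_natural_iso (yo_representable _). Qed.
End Simplex.

(* By induction on [n]: the boundary is built from the empty set by attaching faces of
   dimension [< n]. *)
Lemma representable_rel_boundary n : representable (RelP (T := DeltaS n) f (boundary n)).
Proof.
elim/ltn_ind: n => n IH.
pose l := List.flat_map (fun m => List.map (fun s : Delta m n => existT (sx (DeltaS n)) m s)
            (enum {: Delta m n})) (List.seq 0 n).
have dim_lt m (s : Delta m n) : nondegenerate (s : sx (DeltaS n) m) -> boundary n m s -> m < n.
  move=> nds; apply: (@nondegenerate_face_dim (DeltaS n) m n s (did n)).
  by rewrite [sact _ _ _]dcomp_id_l.
apply: (sset_cell_induction (Q := boundary n) (l := l) (S := emptyS (DeltaS n))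
         (Phi := fun P => representable (RelP f P))) => //.
- by move=> m k t s; apply: contra; apply: surjb_compl.
- move=> m s bs nds; apply/List.in_flat_map; exists m; split.
    by apply/List.in_seq; have := dim_lt m s nds bs; lia.
  by apply: List.in_map; apply: In_mem; rewrite mem_enum.
- exact: representable_rel_empty.
move=> P m s HP _ bs nds nPs s_faces P_rep.
have mn : m < n := dim_lt m s nds bs.
exact: (representable_attach HP nPs s_faces HC P_rep (IH m mn)).
Qed.

Hypothesis Hf : hypercover cover f.

Lemma covering_matching_map n : covering cover (matching_map f (n := n)).
Proof.
have [N [e Re]] := representable_rel_boundary n.
have [h he] := represents_ex (matching_map f (cid (sob X n))) Re.
apply: (covering_of_cover HC (matching_map_natural f (n := n)) (@yo_represents C (sob X n)) Re he).
apply: (Hf (represents_is_MapRel Re)) => m s hs.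
  by have := congr1 (fun w => (sval w).1 m s hs) he; rewrite /= /yocone ccomp_id_r.
by have := congr1 (fun w => (sval w).2 m s hs) he; rewrite /= /yocone ccomp_id_r.
Qed.

Lemma covering_rel_restr_all (T : sset) (S : spred T) :
  finite_sset T -> sub_sset S -> representable (RelP f S) ->
  representable (RelP f (allS T)) /\
  forall ST : subP S (allS T), covering cover (rel_restr (f := f) ST).
Proof.
move=> [l l_nondeg] HS S_rep.
apply: (sset_cell_induction (Q := allS T) (l := l) (S := S)
  (Phi := fun P => representable (RelP f P) /\
            forall SP : subP S P, covering cover (rel_restr (f := f) SP))) => //.
- by move=> n z _; apply: l_nondeg.
- by split=> // SS; apply: covering_rel_restr_refl.
move=> P n x HP SP _ _ nPx x_faces [P_rep P_cov].
have boundary_rep := representable_rel_boundary n.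
split=> [|SA]; first exact: (representable_attach HP nPx x_faces HC P_rep boundary_rep).
apply: (covering_ext (eta := fun U ab => rel_restr SP (rel_restr (subP_attach x) ab))).
  by move=> U ab; apply: rel_restr_comp.
apply: (covering_comp HC (rel_restr_natural _) (rel_restr_natural _)) => //.
- exact: (representable_attach HP nPx x_faces HC P_rep boundary_rep).
- apply: (covering_restr_attach HP nPx x_faces HC P_rep boundary_rep).
  exact: covering_matching_map.
Qed.
End Hypercover.

Theorem lemma3p3 (C : category) (cover : forall A B : ob C, hom A B -> Prop)
  (HC : descent_category cover)
  (T : sset) (HT : finite_sset T)
  (S : forall n, sx T n -> Prop) (HS : sub_sset S)
  (X Y : sobj C) (f : smorph X Y) (Hf : hypercover cover f)
  (M1 : ob C) (c : cone (allS T) X M1) (Hc : is_Map c)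
  (M2 : ob C) (a : cone S X M2) (b : cone (allS T) Y M2) (Hab : is_MapRel f a b)
  (phi : hom M1 M2)
  (Hphi1 : forall n x (hs : S n x) (ht : allS T n x), ccomp (a n x hs) phi = c n x ht)
  (Hphi2 : forall n x (ht : allS T n x), ccomp (b n x ht) phi = ccomp (smap f n) (c n x ht)) :
  cover _ _ phi.
Proof.
have S_rep : representable (RelP f S) by exists M2, (MapRel_pt Hab); apply: is_MapRel_represents.
have [_ restr_cov] := covering_rel_restr_all HC Hf HT HS S_rep.
apply: (restr_cov (fun _ _ _ => I) _ _ _ _ phi (is_Map_represents Hc) (is_MapRel_represents Hab)).
apply: sig_ext; congr pair; apply: cone_ext=> n x hx /=; first exact: Hphi1.
by rewrite Hphi2; case: hx.
Qed.
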